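(* Let $p$ be a prime, $a,b,c\in\mathbb{Z}_p$ with $a\neq 0$, and $P(x,y)=a+bx+cy$. Then $(\mathbb{Z}_p,* )$ with $x*y=P(x,y)$ is a quasigroup with the cross inverse property if and only if $bc\equiv 1\pmod p$.
   Context: $\mathbb{Z}_p$ is the field of integers modulo $p$. A groupoid $(G,\cdot)$ is a quasigroup if for all $u,v\in G$ the equations $u\cdot x=v$ and $y\cdot u=v$ have unique solutions. In a quasigroup, for each $x$ let $e_\rho(x)$ be the unique element with $x\cdot e_\rho(x)=x$, and $x^\rho$ the unique element with $x\cdot x^\rho=e_\rho(x)$. The cross inverse property means $(x\cdot y)\cdot x^\rho=y$ for all $x,y$. *)

From mathcomp Require Import all_boot all_algebra.
Set Implicit Arguments. Unset Strict Implicit. Unset Printing Implicit Defensive.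

Definition is_quasigroup (G : Type) (op : G -> G -> G) : Prop :=
  forall u v : G, (exists! x, op u x = v) /\ (exists! y, op y u = v).

(* Cross inverse property: (x*y)*x^rho = y, where e_rho(x) is the (unique, in a
   quasigroup) e with x*e = x, and x^rho the (unique) r with x*r = e_rho(x).
   Phrased by quantifying over these uniquely determined elements. *)
Definition cross_inverse (G : Type) (op : G -> G -> G) : Prop :=
  forall x e r : G, op x e = x -> op x r = e -> forall y : G, op (op x y) r = y.

(* For [x * y = a + b x + c y] and fixed [x], [r], the map [y |-> (x * y) * r]
   is [y |-> b c y + k] for a constant [k], so the cross inverse identity
   [(x * y) * r = y] at [y = 0] and [y = 1] forces [b c = 1].  Conversely, if
   [b c = 1] then [b] and [c] are mutually inverse, which makes both equations
   [u * x = v] and [y * u = v] uniquely solvable and lets one compute [e] and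
   [r] explicitly. *)
From mathcomp Require Import all_boot all_algebra.
From mathcomp Require Import ring.
Import GRing.Theory.
Local Open Scope ring_scope.

Set Implicit Arguments.
Unset Strict Implicit.

Lemma unique_existsP (T : Type) (P : T -> Prop) (x0 : T) :
  (forall x, P x <-> x = x0) -> exists! x, P x.
Proof. by move=> Px; exists x0; split=> [|x /Px]; [apply/Px|]. Qed.

Section AffineOperation.

Variables (R : comPzRingType) (a b c : R).

Definition affine_op (x y : R) : R := a + b * x + c * y.

Hypothesis bc1 : b * c = 1.

Lemma mulKbc (x : R) : b * (c * x) = x.
Proof. by rewrite mulrA bc1 mul1r. Qed.

Lemma mulKcb (x : R) : c * (b * x) = x.
Proof. by rewrite mulrA (mulrC c) bc1 mul1r. Qed.

Lemma mulr_bc_eq (x t : R) : c * x = t <-> x = b * t.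
Proof. by split=> [<-|->]; rewrite ?mulKbc ?mulKcb. Qed.

Lemma mulr_cb_eq (x t : R) : b * x = t <-> x = c * t.
Proof. by split=> [<-|->]; rewrite ?mulKbc ?mulKcb. Qed.

Lemma affine_op_quasigroup : is_quasigroup affine_op.
Proof.
move=> u v; rewrite /affine_op; split.
- apply: (@unique_existsP _ _ (b * (v - a - b * u))) => x.
  by rewrite -mulr_bc_eq; split=> [<-|->]; ring.
- apply: (@unique_existsP _ _ (c * (v - a - c * u))) => y.
  by rewrite -mulr_cb_eq; split=> [<-|->]; ring.
Qed.

Lemma affine_op_cross_inverse : cross_inverse affine_op.
Proof.
move=> x e r; rewrite /affine_op.
have solve_c t z : a + b * x + c * z = t -> z = b * (t - a - b * x).
  by move=> Ht; apply/mulr_bc_eq; rewrite -Ht; ring.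
move=> /solve_c -> /solve_c -> y.
by rewrite mulKcb !mulrDr mulKbc; ring.
Qed.

End AffineOperation.

Lemma cross_inverse_affine_op_mul1 (R : comPzRingType) (a b c : R) :
  is_quasigroup (affine_op a b c) -> cross_inverse (affine_op a b c) ->
  b * c = 1.
Proof.
move=> Q C; have [[e [He _]] _] := Q 0 0; have [[r [Hr _]] _] := Q 0 e.
have -> : b * c = affine_op a b c (affine_op a b c 0 1) r
                  - affine_op a b c (affine_op a b c 0 0) r.
  by rewrite /affine_op; ring.
by rewrite !(C 0 e r He Hr) subr0.
Qed.

Theorem mainTheorem16 (p : nat) (hp : prime p) (a b c : 'F_p) (ha : a != 0) :
  (is_quasigroup (fun x y : 'F_p => a + b * x + c * y) /\
   cross_inverse (fun x y : 'F_p => a + b * x + c * y))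
  <-> b * c = 1.
Proof.
split=> [[Q C]|bc1].
- exact: cross_inverse_affine_op_mul1 Q C.
- split; [exact: (@affine_op_quasigroup _ a b c bc1)
         | exact: (@affine_op_cross_inverse _ a b c bc1)].
Qed.
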